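(* Let $H(r)$ and $h(r)$ be nonnegative continuous functions on $(0,1]$, let $\kappa\in(0,1/4)$, $C_0\ge1$, $\gamma\ge0$ and $\theta\in(0,1/8)$. Assume that for every $r\in[\kappa,1/2]$, $$\max_{r\le t\le2r}H(t)\le C_0H(2r),\qquad\max_{r\le t,s\le2r}|h(t)-h(s)|\le C_0H(2r),$$ $$H(\theta r)\le\tfrac12H(r)+C_0\big(\omega_1(\kappa/r)+\omega_2(r)+\gamma\big)\{H(2r)+h(2r)\},$$ where $\omega_1,\omega_2$ are nonnegative nondecreasing functions on $[0,1]$ with $\omega_i(0)=0$ and $\int_0^1\frac{\omega_i(s)}{s}ds<\infty$. Then there is $c_0>0$, depending only on $C_0$ (decreasingly), such that if $\gamma\le c_0|\log\kappa|^{-1}$, then $$\max_{\kappa\le r\le1}\{H(r)+h(r)\}\le C\{H(1)+h(1)\},$$ where $C$ depends only on $C_0,\theta,\omega_1,\omega_2$. *)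

From HB Require Import structures.
From mathcomp Require Import all_boot all_order all_algebra.
From mathcomp Require Import all_classical all_reals all_analysis.
Set Implicit Arguments. Unset Strict Implicit. Unset Printing Implicit Defensive.
Import Order.TTheory GRing.Theory Num.Theory.
Import numFieldNormedType.Exports.
Local Open Scope classical_set_scope.
Local Open Scope ring_scope.

Definition admissible_modulus (R : realType) (w : R -> R) : Prop :=
  [/\ (forall x, 0 <= x <= 1 -> 0 <= w x),
      (forall x y, 0 <= x -> x <= y -> y <= 1 -> w x <= w y),
      w 0 = 0 &
      (\int[@lebesgue_measure R]_(s in [set` `]0%R, 1%R]]) (w s / s)%:E < +oo)%E].

(* Iterate the decay inequality along the scales theta^k.  For the window
   [theta^(k+2), theta^k] keep a bound a for H on its lower half, a' for H on its
   upper half and b for h on [theta^(k+2), 1].  Writing t = theta r, the decay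
   inequality bounds H on the next half window by a/2 + E_k (a + a' + b), where E_k
   bounds the coefficient C0 (w1 (kappa/r) + w2 r + gamma) there; since theta 2^m >= 1,
   at most m doublings carry the bound for h one scale down, each costing C0 times a
   bound for H.  The potential b + 5 C_m a + C_m a' (C_m = m C0) therefore grows at
   most by the factor 1 + 6 C_m E_k per scale, hence by exp (6 C_m sum_k E_k) in
   total.  That sum is bounded independently of kappa: the w-terms by the Dini
   condition, which bounds sum_i w (theta^i), and the gamma-terms because at most
   2 |log kappa| scales lie above kappa, so gamma <= |log kappa|^-1 suffices. *)

From HB Require Import structures.
From mathcomp Require Import all_boot all_order all_algebra.
From mathcomp Require Import all_classical all_reals all_analysis.
From mathcomp Require Import ring lra measurable_realfun.
Set Implicit Arguments. Unset Strict Implicit. Unset Printing Implicit Defensive.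
Import Order.TTheory GRing.Theory Num.Theory.
Import numFieldNormedType.Exports.
Local Open Scope classical_set_scope.
Local Open Scope ring_scope.

Lemma exists_expr_le (R : realType) (z t : R) : 0 <= z < 1 -> 0 < t ->
  exists n, z ^+ n <= t.
Proof.
move=> /andP[z0 z1] t0.
have := @cvg_expr R z ltac:(by rewrite ger0_norm).
move=> /cvgr_lt /(_ t t0) [N _ zN].
by exists N; apply/ltW/zN => /=.
Qed.

Lemma exists_pow2_mul_ge1 (R : realType) (x : R) : 0 < x ->
  exists m, 1 <= x * 2 ^+ m.
Proof.
move=> x_gt0.
have half01 : 0 <= (1 / 2 : R) < 1 by apply/andP; split; lra.
have [m half_m] := exists_expr_le half01 x_gt0.
exists m; have p2 : 0 <= (2 : R) ^+ m by rewrite exprn_ge0.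
have := ler_wpM2r p2 half_m.
by rewrite -exprMn (_ : 1 / 2 * 2 = 1) ?expr1n //; field.
Qed.

Lemma exists_expr_bracket (R : realType) (q t : R) : 0 <= q < 1 -> 0 < t ->
  exists k, q ^+ k.+2 <= t /\ (k = 0%N \/ t < q ^+ k.+1).
Proof.
move=> /[dup] q01 /andP[q0 q1] t0; have [n qn_le] := exists_expr_le q01 t0.
have scale_ex : exists k, q ^+ k.+2 <= t.
  by exists n; apply: le_trans qn_le; apply: ler_wiXn2l => //; [exact: ltW | exact: leqW].
have [k t_lo k_min] := ex_minnP scale_ex.
exists k; split => //; case: k t_lo k_min => [|j] _ j_min; [by left | right].
by rewrite ltNge; apply/negP => /j_min; rewrite ltnn.
Qed.

Section modulus_sums.
Variables (R : realType) (w : R -> R).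
Hypotheses (w_ge0 : forall x, 0 <= x <= 1 -> 0 <= w x)
  (w_nd : forall x y, 0 <= x -> x <= y -> y <= 1 -> w x <= w y).
Local Notation mu := (@lebesgue_measure R).

Lemma measurable_fun_modulus_div :
  measurable_fun ([set` `]0, 1]] : set R) (fun s => w s / s).
Proof.
apply: measurable_funM.
  pose w01 x := w (Num.max 0 (Num.min x 1)).
  have w01_nd : {homo w01 : x y / x <= y}.
    move=> x y xy; apply: w_nd.
    - by rewrite le_max lexx.
    - by rewrite le_max2 // le_min2.
    - by rewrite ge_max ler01 ge_min lexx orbT.
  apply: (eq_measurable_fun w01); last exact: nondecreasing_measurable.
  move=> x; rewrite inE /= in_itv /= => /andP[x0 x1].
  by rewrite /w01 (min_idPl x1) (max_idPr (ltW x0)).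
apply: (measurable_funS (E := [set` `]0, +oo[] : set R)) => //.
  by move=> x /=; rewrite !in_itv /= => /andP[-> _].
apply: open_continuous_measurable_fun; first exact: interval_open.
move=> x; rewrite inE /= in_itv /= andbT => x0.
by apply: inv_continuous; rewrite gt_eqF.
Qed.

Lemma modulus_div_ge0 x : [set` `]0, 1]] x -> (0 <= (w x / x)%:E)%E.
Proof.
rewrite /= in_itv /= => /andP[x0 x1].
by rewrite lee_fin divr_ge0 ?(ltW x0) // w_ge0 // ltW //= x1.
Qed.

Lemma modulus_le_integral (a b : R) : 0 < a < b -> b <= 1 ->
  ((w a / b * (b - a))%:E <= \int[mu]_(s in [set` `]a, b]]) (w s / s)%:E)%E.
Proof.
move=> /andP[a0 ab] b1.
have b0 : 0 < b := lt_trans a0 ab.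
have a01 : 0 <= a <= 1 by rewrite ltW //= (le_trans (ltW ab) b1).
have wa0 : 0 <= w a / b by rewrite divr_ge0 ?(ltW b0) ?w_ge0.
have mu_ab : mu [set` `]a, b]] = (b - a)%:E.
  by rewrite lebesgue_measure_itv /= lte_fin ab -EFinD.
rewrite EFinM -mu_ab -integral_cst //=.
apply: ge0_le_integral => //=.
- apply/measurable_EFinP; apply: measurable_funS measurable_fun_modulus_div => //.
  move=> x /=; rewrite !in_itv /= => /andP[ax xb].
  by rewrite (lt_trans a0 ax) (le_trans xb b1).
- move=> x; rewrite in_itv /= => /andP[ax xb].
  have x0 : 0 < x := lt_trans a0 ax.
  rewrite lee_fin; apply: ler_pM => //.
  + exact: w_ge0.
  + by rewrite invr_ge0 ltW.
  + exact: w_nd (ltW a0) (ltW ax) (le_trans xb b1).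
  + by rewrite lef_pV2 // posrE.
Qed.

Lemma geometric_modulus_sum_le_integral (q : R) n : 0 < q < 1 ->
  (((1 - q) * \sum_(j < n) w (q ^+ j.+1))%:E <=
    \int[mu]_(s in [set` `](q ^+ n)%R, 1%R]]) (w s / s)%:E)%E.
Proof.
move=> /andP[q0 q1].
have qn_gt0 k : 0 < q ^+ k by rewrite exprn_gt0.
have qn_le1 k : q ^+ k <= 1 by rewrite exprn_ile1 ?ltW.
have qnS_lt k : q ^+ k.+1 < q ^+ k by rewrite exprSr gtr_pMr.
have sub01 k : [set` `]q ^+ k, 1]] `<=` [set` `]0, 1]].
  by move=> x /=; rewrite !in_itv /= => /andP[kx ->]; rewrite (lt_trans (qn_gt0 k)).
have f_ge0 k x : [set` `]q ^+ k, 1]] x -> (0 <= (w x / x)%:E)%E.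
  by move=> /sub01; exact: modulus_div_ge0.
elim: n => [|n IH].
  by rewrite big_ord0 mulr0 integral_ge0 //; exact: f_ge0.
have qn_le := ltW (qnS_lt n).
rewrite (@itv_bndbnd_setU _ _ _ (BRight (q ^+ n))) ?bnd_simp //.
rewrite ge0_integral_setU //.
- rewrite big_ord_recr /= mulrDr EFinD addeC leeD //.
  have -> : (1 - q) * w (q ^+ n.+1) = w (q ^+ n.+1) / q ^+ n * (q ^+ n - q ^+ n.+1).
    by rewrite exprSr; field; rewrite gt_eqF.
  by apply: modulus_le_integral; rewrite ?qn_gt0 ?qnS_lt.
- rewrite -itv_bndbnd_setU ?bnd_simp //.
  apply/measurable_EFinP.
  by apply: measurable_funS measurable_fun_modulus_div => //; exact: sub01.
- by rewrite -itv_bndbnd_setU ?bnd_simp //; exact: f_ge0.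
- rewrite disj_set2E; apply/eqP/seteqP; split => x //= [].
  by rewrite !in_itv /= => /andP[_ xqn] /andP[+ _]; rewrite ltNge xqn.
Qed.

End modulus_sums.

Lemma admissible_modulus_geometric_sum_bounded (R : realType) (w : R -> R) (q : R) :
  admissible_modulus w -> 0 < q < 1 ->
  exists S, forall n, \sum_(i < n) w (q ^+ i) <= S.
Proof.
case=> w_ge0 w_nd _ w_int /andP[q0 q1].
set I := (\int[@lebesgue_measure R]_(s in _) _)%E in w_int.
have I_ge0 : (0 <= I)%E by apply: integral_ge0; exact: modulus_div_ge0.
exists (w 1 + fine I / (1 - q)) => n.
apply: (@le_trans _ _ (\sum_(i < n.+1) w (q ^+ i))).
  by rewrite big_ord_recr /= lerDl w_ge0 // exprn_ge0 ?exprn_ile1 ?ltW.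
have -> : \sum_(i < n.+1) w (q ^+ i) = w 1 + \sum_(j < n) w (q ^+ j.+1).
  by rewrite big_ord_recl expr0.
rewrite lerD2l ler_pdivlMr ?subr_gt0 // mulrC -lee_fin fineK ?ge0_fin_numE //.
apply: le_trans (geometric_modulus_sum_le_integral w_ge0 w_nd n _) _.
  by rewrite q0 q1.
apply: ge0_subset_integral => //=.
- apply/measurable_EFinP; exact: measurable_fun_modulus_div.
- exact: modulus_div_ge0.
- move=> x /=; rewrite !in_itv /= => /andP[qx ->].
  by rewrite andbT (le_lt_trans _ qx) ?exprn_ge0 ?ltW.
Qed.

Section doubling_iteration.
Variables (R : realType) (C0 theta kappa : R) (H h c : R -> R).
Hypotheses (C0_ge1 : 1 <= C0) (theta_gt0 : 0 < theta) (theta_le_half : theta <= 1 / 2)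
  (kappa_gt0 : 0 < kappa) (kappa_le_half : kappa <= 1 / 2).
Hypothesis Hh_ge0 : forall x, 0 < x <= 1 -> 0 <= H x /\ 0 <= h x.
Hypothesis H_doubling : forall r t, kappa <= r <= 1 / 2 -> r <= t <= 2 * r ->
  H t <= C0 * H (2 * r).
Hypothesis h_doubling : forall r t, kappa <= r <= 1 / 2 -> r <= t <= 2 * r ->
  h t <= h (2 * r) + C0 * H (2 * r).
Hypothesis H_decay : forall r, kappa <= r <= 1 / 2 ->
  H (theta * r) <= 1 / 2 * H r + c r * (H (2 * r) + h (2 * r)).
Hypothesis c_ge0 : forall r, kappa <= r <= 1 / 2 -> 0 <= c r.

Let C0_ge0 : 0 <= C0 := le_trans ler01 C0_ge1.

Lemma H_ge0 t : kappa <= t <= 1 -> 0 <= H t.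
Proof.
by case/andP=> kt t1; case: (Hh_ge0 (x := t) _) => //; rewrite (lt_le_trans kappa_gt0).
Qed.

Lemma H_le_doubling_chain i (B alpha t : R) : 2 * B <= 1 ->
  kappa <= t <= 2 * B -> B <= t * 2 ^+ i ->
  (forall u, B <= u <= 2 * B -> H u <= alpha) -> H t <= C0 ^+ i * alpha.
Proof.
move=> B_le + + HB; elim: i t => [|i IH] t /andP[kt tB] Bt.
  by rewrite expr0 mul1r HB // tB andbT -(mulr1 t) -(expr0 2).
have Ht0 : 0 <= H t by rewrite H_ge0 // kt (le_trans tB).
case: (leP B t) => [Bt' | tB'].
  have Hta := HB t ltac:(by rewrite Bt' tB).
  by apply: (le_trans Hta); rewrite ler_peMl ?exprn_ege1 // (le_trans Ht0 Hta).
have t0 : 0 < t := lt_le_trans kappa_gt0 kt.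
rewrite exprS -mulrA.
apply: le_trans (H_doubling (r := t) _ _) _; first by rewrite kt; lra.
  by rewrite lexx /=; lra.
rewrite ler_wpM2l ?IH //.
  by rewrite (le_trans kt) /=; lra.
by rewrite exprS mulrA [t * 2]mulrC in Bt.
Qed.

Lemma h_le_doubling_chain i (B beta alpha t : R) : 2 * B <= 1 ->
  kappa <= t <= 2 * B -> B <= t * 2 ^+ i ->
  (forall u, B <= u <= 2 * B -> h u <= beta) ->
  (forall u, t <= u <= 2 * B -> H u <= alpha) ->
  h t <= beta + i%:R * C0 * alpha.
Proof.
move=> B_le + + hB; elim: i t => [|i IH] t /andP[kt tB] Bt Ht.
  by rewrite mul0r mul0r addr0 hB // tB andbT -(mulr1 t) -(expr0 2).
have alpha_ge0 : 0 <= alpha.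
  apply: (le_trans (H_ge0 (t := t) _)); first by rewrite kt (le_trans tB).
  by apply: Ht; rewrite lexx tB.
have iCa_ge0 : 0 <= i%:R * C0 * alpha by rewrite !mulr_ge0.
rewrite -natr1 mulrDl mul1r mulrDl addrA.
case: (leP B t) => [Bt' | tB'].
  have := hB t ltac:(by rewrite Bt' tB).
  have : 0 <= C0 * alpha by rewrite mulr_ge0.
  lra.
have t0 : 0 < t := lt_le_trans kappa_gt0 kt.
have h2t := IH (2 * t) ltac:(apply/andP; split; lra)
  ltac:(by rewrite exprS mulrA [t * 2]mulrC in Bt)
  ltac:(move=> u /andP[tu uB]; apply: Ht; apply/andP; split; lra).
have H2t := Ht (2 * t) ltac:(apply/andP; split; lra).
have := h_doubling (r := t) (t := t) ltac:(rewrite kt; lra) ltac:(rewrite lexx; lra).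
have : C0 * H (2 * t) <= C0 * alpha by rewrite ler_wpM2l.
lra.
Qed.

Let theta_expr_gt0 n : 0 < theta ^+ n := exprn_gt0 n theta_gt0.

Lemma theta_expr_le1 n : theta ^+ n <= 1.
Proof. by rewrite exprn_ile1 ?ltW //; have := theta_le_half; lra. Qed.

Lemma theta_exprS_double n : 2 * theta ^+ n.+1 <= theta ^+ n.
Proof. by rewrite exprSr mulrCA ger_pMr ?theta_expr_gt0 //; have := theta_le_half; lra. Qed.

Lemma theta_exprS_le n : theta ^+ n.+1 <= theta ^+ n.
Proof. by have := theta_exprS_double n; have := theta_expr_gt0 n.+1; lra. Qed.

Variable m : nat.
Hypothesis theta_pow2_ge1 : 1 <= theta * 2 ^+ m.

Let two_half : 2 * (1 / 2) = 1 :> R.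
Proof. by field. Qed.

Lemma Hh_top_bounds u : 1 / 2 <= u <= 1 -> H u <= C0 * H 1 /\ h u <= h 1 + C0 * H 1.
Proof.
move=> u_in; rewrite -two_half.
by split; [apply: H_doubling | apply: h_doubling]; rewrite ?two_half // kappa_le_half lexx.
Qed.

Lemma half_le_pow2_2m u : theta ^+ 2 <= u -> 1 / 2 <= u * 2 ^+ (2 * m).
Proof.
move=> tu; have p2 : 0 <= (2 : R) ^+ (2 * m) by rewrite exprn_ge0.
have : theta ^+ 2 * 2 ^+ (2 * m) <= u * 2 ^+ (2 * m) by rewrite ler_wpM2r.
have : 1 <= theta ^+ 2 * 2 ^+ (2 * m) by rewrite mulnC exprM -exprMn exprn_ege1.
lra.
Qed.

Definition base_const := (2 * m).+1%:R * C0 ^+ (2 * m).+2.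

Lemma H_le_base t : kappa <= t -> theta ^+ 2 <= t <= 1 -> H t <= C0 ^+ (2 * m).+1 * H 1.
Proof.
move=> kt /andP[tt t1]; rewrite exprSr -mulrA.
apply: (H_le_doubling_chain (B := 1 / 2)).
- lra.
- by rewrite kt; lra.
- exact: half_le_pow2_2m.
- by move=> v; rewrite two_half => /Hh_top_bounds[].
Qed.

Lemma h_le_base t : kappa <= t -> theta ^+ 2 <= t <= 1 ->
  h t <= h 1 + base_const * H 1.
Proof.
move=> kt /andP[tt t1].
have [H1_ge0 _] := Hh_ge0 (x := 1) ltac:(by rewrite ltr01 lexx).
have ht : h t <= h 1 + C0 * H 1 + (2 * m)%:R * (C0 ^+ (2 * m).+2 * H 1).
  have := @h_le_doubling_chain (2 * m) (1 / 2) (h 1 + C0 * H 1) (C0 ^+ (2 * m).+1 * H 1) t.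
  rewrite -[_ * C0 * _]mulrA [C0 * (_ * _)]mulrA -exprS; apply.
  - lra.
  - by rewrite kt; lra.
  - exact: half_le_pow2_2m.
  - by move=> v; rewrite two_half => /Hh_top_bounds[].
  - move=> u /andP[tu u1]; apply: H_le_base; first exact: le_trans kt tu.
    by rewrite (le_trans tt tu); lra.
have : C0 * H 1 <= C0 ^+ (2 * m).+2 * H 1.
  by rewrite ler_wpM2r // -[X in X <= _]expr1 ler_weXn2l.
by rewrite /base_const -natr1 mulrDl mul1r; lra.
Qed.

Lemma base_const_ge1 : 1 <= base_const.
Proof. by rewrite -[1]mulr1 ler_pM ?ler1n ?exprn_ege1. Qed.

Lemma C0_expr_le_base_const : C0 ^+ (2 * m).+1 <= base_const.
Proof.
rewrite /base_const -[X in X <= _]mul1r ler_pM ?ler1n ?exprn_ge0 //.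
exact: ler_weXn2l C0_ge1 _ _ (leqnSn _).
Qed.

Definition Cm := m%:R * C0.

Lemma Cm_ge1 : 1 <= Cm.
Proof.
have m_ge1 : (1 <= m)%N.
  by case: m theta_pow2_ge1 => // /[!(expr0, mulr1)]; have := theta_le_half; lra.
by rewrite -[1]mulr1 ler_pM ?ler1n.
Qed.

Let Cm_ge0 : 0 <= Cm := le_trans ler01 Cm_ge1.

Definition scale_bounds k (a a' b : R) : Prop :=
  [/\ [/\ 0 <= a, 0 <= a' & 0 <= b],
    forall t, kappa <= t -> theta ^+ k.+2 <= t <= theta ^+ k.+1 -> H t <= a,
    forall t, kappa <= t -> theta ^+ k.+1 <= t <= theta ^+ k -> H t <= a' &
    forall t, kappa <= t -> theta ^+ k.+2 <= t <= 1 -> h t <= b].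

Lemma scale_bounds0 (D := base_const * (H 1 + h 1)) : scale_bounds 0 D D D.
Proof.
have [H1_ge0 h1_ge0] := Hh_ge0 (x := 1) ltac:(by rewrite ltr01 lexx).
have base_ge0 := le_trans ler01 base_const_ge1.
have : C0 ^+ (2 * m).+1 * H 1 <= base_const * H 1.
  by rewrite ler_wpM2r // C0_expr_le_base_const.
have : h 1 <= base_const * h 1 by rewrite ler_peMl // base_const_ge1.
have := mulr_ge0 base_ge0 h1_ge0; have := mulr_ge0 base_ge0 H1_ge0.
rewrite /D mulrDr => ? ? ? ?.
have le1 := theta_expr_le1; have leS := theta_exprS_le.
split=> [| t kt /andP[lo hi] | t kt /andP[lo hi] | t kt t_in].
- by split; lra.
- by have := H_le_base kt ltac:(by rewrite lo (le_trans hi)); lra.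
- by have := H_le_base kt ltac:(by rewrite (le_trans (leS 1)) // hi); lra.
- by have := h_le_base kt t_in; lra.
Qed.



Definition next_H_bound E (a a' b : R) := a / 2 + E * (a + a' + b).

Section scale_step.
Variables (k : nat) (E a a' b : R).
Hypothesis c_le_E : forall r, kappa <= r -> theta ^+ k.+2 <= r <= theta ^+ k.+1 -> c r <= E.
Hypothesis bounds_k : scale_bounds k a a' b.
Hypothesis E_ge0 : 0 <= E.

Lemma H_le_next_scale t : kappa <= t -> theta ^+ k.+3 <= t <= theta ^+ k.+2 ->
  H t <= next_H_bound E a a' b.
Proof.
case: bounds_k => -[a0 a'0 b0] Ha Ha' hb kt /andP[t_lo t_hi].
have t0 : 0 < t := lt_le_trans kappa_gt0 kt.
have th0 := theta_gt0; have th_half := theta_le_half.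
set r := t / theta.
have r_th : theta * r = t by rewrite mulrC divfK ?gt_eqF.
have tr : t <= r by rewrite ler_pdivlMr // ger_pMr //; lra.
have r_lo : theta ^+ k.+2 <= r by rewrite ler_pdivlMr // -exprSr.
have r_hi : r <= theta ^+ k.+1 by rewrite ler_pdivrMr // -exprSr.
have r_half : r <= 1 / 2.
  apply: (le_trans r_hi); rewrite exprS; apply: le_trans th_half.
  by rewrite ger_pMr // theta_expr_le1.
have kr : kappa <= r := le_trans kt tr.
have dbl := theta_exprS_double k; have le1 := theta_expr_le1 k.
have H2r : H (2 * r) <= a + a'.
  have [H2r_ge0 _] := Hh_ge0 (x := 2 * r) ltac:(apply/andP; split; lra).
  case: (leP (2 * r) (theta ^+ k.+1)) => r2.
    by have := Ha (2 * r) ltac:(lra) ltac:(apply/andP; split; lra); lra.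
  by have := Ha' (2 * r) ltac:(lra) ltac:(apply/andP; split; lra); lra.
have h2r : h (2 * r) <= b by apply: hb; [lra | apply/andP; split; lra].
have Hh2r_ge0 : 0 <= H (2 * r) + h (2 * r).
  by case: (Hh_ge0 (x := 2 * r) ltac:(apply/andP; split; lra)) => ? ?; lra.
have coef : c r * (H (2 * r) + h (2 * r)) <= E * (a + a' + b).
  by rewrite ler_pM ?c_ge0 ?kr ?c_le_E ?r_lo //; lra.
have := H_decay (r := r) ltac:(by rewrite kr).
have := Ha r kr ltac:(by rewrite r_lo).
rewrite r_th /next_H_bound; lra.
Qed.

Lemma next_H_bound_ge0 : 0 <= next_H_bound E a a' b.
Proof.
have [[a0 a'0 b0] _ _ _] := bounds_k.
by rewrite addr_ge0 ?divr_ge0 // mulr_ge0 // !addr_ge0.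
Qed.

Lemma h_le_next_scale t : kappa <= t -> theta ^+ k.+3 <= t <= 1 ->
  h t <= b + Cm * (next_H_bound E a a' b + a).
Proof.
have [[a0 _ b0] Ha _ hb] := bounds_k.
have an0 := next_H_bound_ge0.
move=> kt /andP[t_lo t1].
have dbl := theta_exprS_double k.+1; have le1 := theta_expr_le1 k.+1.
have tpos := theta_expr_gt0 k.+2.
case: (leP (theta ^+ k.+2) t) => [t_hi | t_lo'].
  have := hb t kt ltac:(by rewrite t_hi).
  have := mulr_ge0 Cm_ge0 (addr_ge0 an0 a0).
  lra.
rewrite /Cm.
apply: (h_le_doubling_chain (B := theta ^+ k.+2)).
- lra.
- by rewrite kt; lra.
- have p2 : 0 <= (2 : R) ^+ m by rewrite exprn_ge0.
  apply: le_trans (ler_wpM2r p2 t_lo); rewrite [theta ^+ k.+3]exprSr -mulrA.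
  by rewrite ler_peMr // ltW.
- by move=> u /andP[u_lo u_hi]; apply: hb; [lra | apply/andP; split; lra].
- move=> u /andP[tu u_hi]; case: (leP u (theta ^+ k.+2)) => u2.
    by have := H_le_next_scale (t := u) ltac:(lra) ltac:(apply/andP; split; lra); lra.
  by have := Ha u ltac:(lra) ltac:(apply/andP; split; lra); lra.
Qed.

Lemma scale_bounds_step :
  scale_bounds k.+1 (next_H_bound E a a' b) a (b + Cm * (next_H_bound E a a' b + a)).
Proof.
have [[a0 _ b0] Ha _ _] := bounds_k.
split; [split | exact: H_le_next_scale | exact: Ha | exact: h_le_next_scale] => //.
- exact: next_H_bound_ge0.
- by rewrite addr_ge0 // mulr_ge0 // addr_ge0 // next_H_bound_ge0.
Qed.

End scale_step.

Definition potential (a a' b : R) := b + 5 * Cm * a + Cm * a'.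

Lemma sum_le_potential a a' b : 0 <= a -> 0 <= a' -> 0 <= b ->
  a + a' + b <= potential a a' b.
Proof.
move=> a0 a'0 b0.
have : a <= Cm * a by rewrite ler_peMl ?Cm_ge1.
have : a' <= Cm * a' by rewrite ler_peMl ?Cm_ge1.
rewrite /potential; lra.
Qed.

Lemma potential_next_le E a a' b : 0 <= E -> 0 <= a -> 0 <= a' -> 0 <= b ->
  potential (next_H_bound E a a' b) a (b + Cm * (next_H_bound E a a' b + a))
    <= (1 + 6 * Cm * E) * potential a a' b.
Proof.
move=> E0 a0 a'0 b0.
have -> : potential (next_H_bound E a a' b) a (b + Cm * (next_H_bound E a a' b + a)) =
    potential a a' b - Cm * a' + 6 * Cm * E * (a + a' + b).
  by rewrite /potential /next_H_bound; field.
have : 6 * Cm * E * (a + a' + b) <= 6 * Cm * E * potential a a' b.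
  by rewrite ler_wpM2l ?sum_le_potential // !mulr_ge0.
have := mulr_ge0 Cm_ge0 a'0.
lra.
Qed.

Variable E : nat -> R.
Hypothesis c_le_E : forall j r, kappa <= theta ^+ j.+2 ->
  theta ^+ j.+2 <= r <= theta ^+ j.+1 -> c r <= E j.

Lemma scale_bounds_iter (D := base_const * (H 1 + h 1)) k :
  k = 0%N \/ kappa <= theta ^+ k.+1 -> exists a a' b, scale_bounds k a a' b /\
    potential a a' b <= potential D D D * expR (6 * Cm * \sum_(j < k) E j).
Proof.
elim: k => [_ | k IH [//| k_ok]].
  by exists D, D, D; rewrite big_ord0 mulr0 expR0 mulr1; split; first exact: scale_bounds0.
have [a [a' [b [bounds_k pot_k]]]] := IH (or_intror (le_trans k_ok (theta_exprS_le _))).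
have E_ge0 : 0 <= E k.
  apply: le_trans (c_le_E (r := theta ^+ k.+2) k_ok _); last by rewrite lexx theta_exprS_le.
  apply: c_ge0; rewrite k_ok (le_trans (theta_exprS_le _)) // exprS.
  by rewrite (le_trans _ theta_le_half) // ger_pMr // theta_expr_le1.
have [[a0 a'0 b0] _ _ _] := bounds_k.
exists (next_H_bound (E k) a a' b), a, (b + Cm * (next_H_bound (E k) a a' b + a)).
split; first by apply: scale_bounds_step => // r _; exact: c_le_E.
apply: (le_trans (potential_next_le E_ge0 a0 a'0 b0)).
have -> : \sum_(j < k.+1) E j = \sum_(j < k) E j + E k by rewrite big_ord_recr.
rewrite [6 * Cm * (_ + _)]mulrDr expRD mulrA [X in _ <= X]mulrC.
apply: ler_pM => //; last exact: expR_ge1Dx.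
- by rewrite addr_ge0 // !mulr_ge0.
- by apply: le_trans (sum_le_potential a0 a'0 b0); rewrite !addr_ge0.
Qed.

Definition doubling_const := (1 + 6 * Cm) * base_const.

Lemma doubling_const_ge0 : 0 <= doubling_const.
Proof.
rewrite /doubling_const mulr_ge0 //; first by rewrite addr_ge0 // mulr_ge0.
by rewrite /base_const mulr_ge0 // exprn_ge0.
Qed.

Lemma H_add_h_le t : kappa <= t <= 1 ->
  exists k, (k = 0%N \/ kappa <= theta ^+ k.+1) /\
    H t + h t <= doubling_const * (H 1 + h 1) * expR (6 * Cm * \sum_(j < k) E j).
Proof.
case/andP=> kt t1; have t0 : 0 < t := lt_le_trans kappa_gt0 kt.
have theta01 : 0 <= theta < 1 by rewrite ltW //=; have := theta_le_half; lra.
have [k [t_lo t_hi]] := exists_expr_bracket theta01 t0.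
have k_ok : k = 0%N \/ kappa <= theta ^+ k.+1.
  by case: t_hi => [|t_hi]; [left | right; rewrite (le_trans kt) ?ltW].
have [a [a' [b [[[a0 a'0 b0] Ha Ha' hb] pot]]]] := scale_bounds_iter k_ok.
exists k; split => //.
have Ht : H t <= a + a'.
  case: (leP t (theta ^+ k.+1)) => t_k.
    by have := Ha t kt ltac:(by rewrite t_lo); lra.
  have : H t <= a'.
    apply: Ha' => //; rewrite (ltW t_k) /=.
    by case: t_hi => [-> | ?]; [rewrite expr0 | lra].
  lra.
have := hb t kt ltac:(by rewrite t_lo).
have := sum_le_potential a0 a'0 b0.
have -> : doubling_const * (H 1 + h 1) =
    potential (base_const * (H 1 + h 1)) (base_const * (H 1 + h 1)) (base_const * (H 1 + h 1)).
  by rewrite /doubling_const /potential; ring.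
lra.
Qed.

End doubling_iteration.

Lemma natr_le_2_norm_ln (R : realType) (theta kappa : R) k :
  0 < theta <= 1 / 2 -> 0 < kappa <= theta ^+ k -> k%:R <= 2 * `|ln kappa|.
Proof.
move=> /andP[th0 th_half] /andP[ka0 ka_k].
have ln_theta : ln theta <= - (1 / 2).
  by have := @le_ln1Dx R (theta - 1) ltac:(lra); rewrite addrC subrK; lra.
have : ln kappa <= ln theta *+ k by rewrite -lnXn // ler_ln ?posrE ?exprn_gt0.
rewrite -mulr_natr => ln_ka.
have : ln theta * k%:R <= - (1 / 2) * k%:R by rewrite ler_wpM2r.
have := ler_norm (- ln kappa); rewrite normrN.
lra.
Qed.

Section scale_coefficients.
Variables (R : realType) (C0 theta kappa gamma : R) (w1 w2 : R -> R).
Hypotheses (C0_ge0 : 0 <= C0) (theta_gt0 : 0 < theta) (theta_le_half : theta <= 1 / 2)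
  (kappa_gt0 : 0 < kappa) (gamma_ge0 : 0 <= gamma).
Hypotheses (w1_ge0 : forall x, 0 <= x <= 1 -> 0 <= w1 x)
  (w1_nd : forall x y, 0 <= x -> x <= y -> y <= 1 -> w1 x <= w1 y)
  (w2_ge0 : forall x, 0 <= x <= 1 -> 0 <= w2 x)
  (w2_nd : forall x y, 0 <= x -> x <= y -> y <= 1 -> w2 x <= w2 y).

Definition modulus_coef r := C0 * (w1 (kappa / r) + w2 r + gamma).

Definition scale_coef j :=
  C0 * (w1 (kappa / theta ^+ j.+2) + w2 (theta ^+ j.+1) + gamma).

Lemma modulus_coef_ge0 r : kappa <= r <= 1 / 2 -> 0 <= modulus_coef r.
Proof.
case/andP=> kr r_half; have r0 : 0 < r := lt_le_trans kappa_gt0 kr.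
rewrite /modulus_coef mulr_ge0 // !addr_ge0 //.
- by apply: w1_ge0; rewrite divr_ge0 ?(ltW kappa_gt0) ?(ltW r0) //= ler_pdivrMr // mul1r.
- by apply: w2_ge0; rewrite ltW //=; lra.
Qed.

Lemma modulus_coef_le j r : kappa <= theta ^+ j.+2 ->
  theta ^+ j.+2 <= r <= theta ^+ j.+1 -> modulus_coef r <= scale_coef j.
Proof.
move=> k_j /andP[r_lo r_hi].
have th_j n : 0 < theta ^+ n by rewrite exprn_gt0.
have th_le1 n : theta ^+ n <= 1.
  by rewrite exprn_ile1 ?ltW //; have := theta_le_half; lra.
have r0 : 0 < r := lt_le_trans (th_j _) r_lo.
rewrite ler_wpM2l // lerD2r lerD //.
- apply: w1_nd; first by rewrite divr_ge0 ?ltW.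
    by rewrite ler_pM2l // lef_pV2 ?posrE.
  by rewrite ler_pdivrMr // mul1r.
- exact: w2_nd (ltW r0) r_hi (th_le1 _).
Qed.

Lemma sum_w1_scale_le k : kappa <= theta ^+ k.+1 ->
  \sum_(j < k) w1 (kappa / theta ^+ j.+2) <= \sum_(i < k) w1 (theta ^+ i).
Proof.
move=> k_k; rewrite [X in _ <= X](reindex_inj rev_ord_inj) /=.
apply: ler_sum => j _; apply: w1_nd.
- by rewrite divr_ge0 ?ltW ?exprn_gt0.
- have kj : (k - j.+1 + j.+2 = k.+1)%N by rewrite addnS subnK // ltn_ord.
  by rewrite ler_pdivrMr ?exprn_gt0 // -exprD kj.
- by rewrite exprn_ile1 ?ltW //; have := theta_le_half; lra.
Qed.

Lemma sum_scale_coef_le k (S1 S2 : R) :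
  (forall n, \sum_(i < n) w1 (theta ^+ i) <= S1) ->
  (forall n, \sum_(i < n) w2 (theta ^+ i) <= S2) ->
  gamma <= `|ln kappa|^-1 -> k = 0%N \/ kappa <= theta ^+ k.+1 ->
  \sum_(j < k) scale_coef j <= C0 * (S1 + S2 + 2).
Proof.
move=> S1_ub S2_ub gamma_le [->|k_k].
  rewrite big_ord0 mulr_ge0 //.
  by have := S1_ub 0%N; have := S2_ub 0%N; rewrite !big_ord0; lra.
rewrite /scale_coef -mulr_sumr ler_wpM2l // !big_split /=.
have w1_sum := le_trans (sum_w1_scale_le k_k) (S1_ub k).
have w2_sum : \sum_(j < k) w2 (theta ^+ j.+1) <= S2.
  apply: le_trans (S2_ub k.+1); rewrite big_ord_recl expr0 lerDr w2_ge0 //.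
  by rewrite ler01 lexx.
have gamma_sum : \sum_(j < k) gamma <= 2.
  rewrite sumr_const card_ord -[gamma *+ k]mulr_natl.
  have k_ln : k%:R <= 2 * `|ln kappa|.
    apply: (@natr_le_2_norm_ln R theta kappa k); apply/andP; split => //.
    rewrite (le_trans k_k) // exprSr ger_pMr ?exprn_gt0 //.
    by have := theta_le_half; lra.
  apply: (le_trans (ler_wpM2r gamma_ge0 k_ln)).
  rewrite -mulrA -[X in _ <= X]mulr1 ler_wpM2l //.
  have [->|ln0] := eqVneq `|ln kappa| 0; first by rewrite mul0r.
  by rewrite -(mulfV ln0) ler_wpM2l.
lra.
Qed.

End scale_coefficients.

Section decay_estimate.
Variables (R : realType) (C0 theta : R) (w1 w2 : R -> R) (m : nat) (S1 S2 : R).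
Hypotheses (C0_ge1 : 1 <= C0) (theta_gt0 : 0 < theta) (theta_le_half : theta <= 1 / 2)
  (theta_pow2_ge1 : 1 <= theta * 2 ^+ m).
Hypotheses (w1_adm : admissible_modulus w1) (w2_adm : admissible_modulus w2).
Hypotheses (S1_ub : forall n, \sum_(i < n) w1 (theta ^+ i) <= S1)
  (S2_ub : forall n, \sum_(i < n) w2 (theta ^+ i) <= S2).

Definition decay_const := doubling_const C0 m * expR (6 * Cm C0 m * (C0 * (S1 + S2 + 2))).

Lemma H_add_h_le_decay_const (kappa gamma : R) (H h : R -> R) :
  0 < kappa <= 1 / 2 -> 0 <= gamma ->
  (forall x, 0 < x <= 1 -> 0 <= H x /\ 0 <= h x) ->
  (forall r, kappa <= r <= 1 / 2 ->
     [/\ (forall t, r <= t <= 2 * r -> H t <= C0 * H (2 * r)),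
         (forall t s, r <= t <= 2 * r -> r <= s <= 2 * r ->
             `|h t - h s| <= C0 * H (2 * r)) &
         H (theta * r) <= 1 / 2 * H r +
           C0 * (w1 (kappa / r) + w2 r + gamma) * (H (2 * r) + h (2 * r))]) ->
  gamma <= `|ln kappa|^-1 ->
  forall t, kappa <= t <= 1 -> H t + h t <= decay_const * (H 1 + h 1).
Proof.
move=> /andP[kappa_gt0 kappa_le_half] gamma_ge0 Hh_ge0 hyp gamma_le t t_in.
have C0_ge0 : 0 <= C0 by have := C0_ge1; lra.
have [w1_ge0 w1_nd _ _] := w1_adm; have [w2_ge0 w2_nd _ _] := w2_adm.
have H_doubling r s : kappa <= r <= 1 / 2 -> r <= s <= 2 * r -> H s <= C0 * H (2 * r).
  by move=> /hyp[+ _ _]; apply.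
have h_doubling r s : kappa <= r <= 1 / 2 -> r <= s <= 2 * r ->
    h s <= h (2 * r) + C0 * H (2 * r).
  move=> /[dup] r_in /andP[kr _] s_in; case: (hyp r r_in) => _ osc _.
  have r2r : r <= 2 * r <= 2 * r by rewrite lexx andbT; lra.
  by have := osc s (2 * r) s_in r2r; rewrite ler_distl => /andP[_].
have H_decay r : kappa <= r <= 1 / 2 -> H (theta * r) <=
    1 / 2 * H r + modulus_coef C0 kappa gamma w1 w2 r * (H (2 * r) + h (2 * r)).
  by move=> /hyp[].
have [k [k_ok Hh_le]] := H_add_h_le C0_ge1 theta_gt0 theta_le_half kappa_gt0
  kappa_le_half Hh_ge0 H_doubling h_doubling H_decay
  (modulus_coef_ge0 C0_ge0 kappa_gt0 gamma_ge0 w1_ge0 w2_ge0) theta_pow2_ge1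
  (modulus_coef_le gamma C0_ge0 theta_gt0 theta_le_half kappa_gt0 w1_nd w2_nd) t_in.
have [H1_ge0 h1_ge0] := Hh_ge0 1 ltac:(by rewrite ltr01 lexx).
have Cm_ge0 := le_trans ler01 (Cm_ge1 C0_ge1 theta_le_half theta_pow2_ge1).
apply: (le_trans Hh_le); rewrite mulrAC ler_wpM2r ?addr_ge0 //.
rewrite ler_wpM2l ?(doubling_const_ge0 C0_ge1 theta_le_half theta_pow2_ge1) //.
rewrite ler_expR ler_wpM2l ?mulr_ge0 //.
exact: (sum_scale_coef_le C0_ge0 theta_gt0 theta_le_half kappa_gt0 gamma_ge0 w1_nd w2_ge0
  S1_ub S2_ub gamma_le k_ok).
Qed.

End decay_estimate.

Theorem lemma4p9 (R : realType) :
  exists c0 : R -> R,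
    (forall x, 1 <= x -> 0 < c0 x) /\
    (forall x y, 1 <= x -> x <= y -> c0 y <= c0 x) /\
    forall (C0 theta : R) (w1 w2 : R -> R),
      1 <= C0 -> 0 < theta < 1 / 8 ->
      admissible_modulus w1 -> admissible_modulus w2 ->
      exists C : R,
        forall (kappa gamma : R) (H h : R -> R),
          0 < kappa < 1 / 4 -> 0 <= gamma ->
          (forall x, 0 < x <= 1 -> 0 <= H x /\ 0 <= h x) ->
          {within [set` `]0, 1]], continuous H} ->
          {within [set` `]0, 1]], continuous h} ->
          (forall r, kappa <= r <= 1 / 2 ->
             [/\ (forall t, r <= t <= 2 * r -> H t <= C0 * H (2 * r)),
                 (forall t s, r <= t <= 2 * r -> r <= s <= 2 * r ->
                     `|h t - h s| <= C0 * H (2 * r)) &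
                 H (theta * r) <= 1 / 2 * H r +
                   C0 * (w1 (kappa / r) + w2 r + gamma) * (H (2 * r) + h (2 * r))]) ->
          gamma <= c0 C0 * `|ln kappa|^-1 ->
          forall r, kappa <= r <= 1 -> H r + h r <= C * (H 1 + h 1).
Proof.
exists (fun=> 1); split; first by move=> *; exact: ltr01.
split; first by move=> *; exact: lexx.
move=> C0 theta w1 w2 C0_ge1 /andP[theta_gt0 theta_lt] w1_adm w2_adm.
have theta_le_half : theta <= 1 / 2 by lra.
have theta01 : 0 < theta < 1 by rewrite theta_gt0; lra.
have [m theta_m] := exists_pow2_mul_ge1 theta_gt0.
have [S1 S1_ub] := admissible_modulus_geometric_sum_bounded w1_adm theta01.
have [S2 S2_ub] := admissible_modulus_geometric_sum_bounded w2_adm theta01.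
exists (decay_const C0 m S1 S2).
(* A pointwise bound needs no continuity of H and h. *)
move=> kappa gamma H h /andP[kappa_gt0 kappa_lt] gamma_ge0 Hh_ge0 _ _ hyp.
rewrite mul1r; apply: (H_add_h_le_decay_const C0_ge1 theta_gt0 theta_le_half theta_m
  w1_adm w2_adm S1_ub S2_ub _ gamma_ge0 Hh_ge0 hyp).
by apply/andP; split => //; lra.
Qed.
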